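(* There exists no generalized matching mechanism that is resolute, symmetric and Pareto optimal.
   Context: Fix $n\ge 2$, $W=\{1,\dots,n\}$ (women), $M=\{n+1,\dots,2n\}$ (men), $I=W\cup M$. Permutations compose right-to-left. A generalized preference profile is a function $\bar p$ on $I$ assigning to each $x\in W$ a linear order $\bar p(x)$ on $M\cup\{x\}$ and to each $y\in M$ a linear order $\bar p(y)$ on $W\cup\{y\}$ (being ranked oneself means being unmatched); $\overline{\mathcal{P}}$ is the set of these. A generalized matching is a permutation $\bar\mu$ of $I$ such that for $x\in W$, $\bar\mu(x)\ne x$ implies $\bar\mu(x)\in M$; for $y\in M$, $\bar\mu(y)\neq y$ implies $\bar\mu(y)\in W$; and $\bar\mu(\bar\mu(z))=z$ for all $z$; $\overline{\mathcal{M}}$ is the set of these. $\bar\mu$ is Pareto optimal for $\bar p$ if there is no $\bar\mu'\in\overline{\mathcal{M}}$ with $\bar\mu'(z)\succeq_{\bar p(z)}\bar\mu(z)$ for all $z\in I$ and $\bar\mu'(z^* )\succ_{\bar p(z^* )}\bar\mu(z^* )$ for some $z^*$. Let $G^*=\{\varphi\in\mathrm{Sym}(I):\{\varphi(W),\varphi(M)\}=\{W,M\}\}$. For a linear order $R$ on $X\subseteq I$ and $\varphi\in\mathrm{Sym}(I)$, $\varphi R$ is the relation on $\varphi(X)$ with $(a,b)\in\varphi R$ iff $(\varphi^{-1}(a),\varphi^{-1}(b))\in R$. For $\varphi\in G^*$, $\bar p^\varphi(z)=\varphi\,\bar p(\varphi^{-1}(z))$; for a permutation $\mu$, $\mu^\varphi=\varphi\mu\varphi^{-1}$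 and $S^\varphi=\{\mu^\varphi:\mu\in S\}$. A generalized matching mechanism is a correspondence $F$ from $\overline{\mathcal{P}}$ to $\overline{\mathcal{M}}$; it is resolute if $|F(\bar p)|=1$ for all $\bar p$; Pareto optimal if all elements of $F(\bar p)$ are Pareto optimal for $\bar p$, for all $\bar p$; symmetric if $F(\bar p^\varphi)=F(\bar p)^\varphi$ for all $\bar p\in\overline{\mathcal{P}}$, $\varphi\in G^*$. *)

From mathcomp Require Import all_boot all_fingroup.
Set Implicit Arguments. Unset Strict Implicit. Unset Printing Implicit Defensive.

(* Agents: I = 'I_(2n) (0-indexed).  Women W = {i | i < n} (paper's 1..n),
   men M = {i | n <= i} (paper's n+1..2n). *)
Notation agent n := ('I_(2 * n)).

Definition women (n : nat) : {set agent n} := [set i : agent n | i < n].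
Definition men (n : nat) : {set agent n} := [set i : agent n | n <= i].

(* A (weak-order-style) linear order on X is the set R of pairs (a,b) with
   "a is ranked at least as high as b": reflexive on X, antisymmetric,
   transitive and total on X, with field exactly X. *)
Definition linear_order_on (T : finType) (X : {set T}) (R : {set T * T}) : Prop :=
  [/\ R \subset setX X X,
      forall a, a \in X -> (a, a) \in R,
      forall a b, (a, b) \in R -> (b, a) \in R -> a = b,
      forall a b c, (a, b) \in R -> (b, c) \in R -> (a, c) \in R
    & forall a b, a \in X -> b \in X -> ((a, b) \in R \/ (b, a) \in R)].

Definition weakly_pref (T : finType) (R : {set T * T}) (a b : T) := (a, b) \in R.
Definition strictly_pref (T : finType) (R : {set T * T}) (a b : T) :=
  (a, b) \in R /\ a <> b.

Definition profile (n : nat) := {ffun agent n -> {set agent n * agent n}}.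

Definition gen_profile (n : nat) (p : profile n) : Prop :=
  forall z : agent n,
    (z \in women n -> linear_order_on (z |: men n) (p z)) /\
    (z \in men n -> linear_order_on (z |: women n) (p z)).

Definition gen_matching (n : nat) (mu : {perm agent n}) : Prop :=
  [/\ forall x, x \in women n -> mu x != x -> mu x \in men n,
      forall y, y \in men n -> mu y != y -> mu y \in women n
    & forall z, mu (mu z) = z].

Definition pareto_optimal (n : nat) (p : profile n) (mu : {perm agent n}) : Prop :=
  ~ exists mu' : {perm agent n},
      [/\ gen_matching mu',
          forall z, weakly_pref (p z) (mu' z) (mu z)
        & exists zs, strictly_pref (p zs) (mu' zs) (mu zs)].

Definition Gstar (n : nat) (phi : {perm agent n}) : Prop :=
  (phi @: women n = women n /\ phi @: men n = men n) \/
  (phi @: women n = men n /\ phi @: men n = women n).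

Definition rel_act (n : nat) (phi : {perm agent n}) (R : {set agent n * agent n})
  : {set agent n * agent n} :=
  [set (phi ab.1, phi ab.2) | ab in R].

Definition profile_act (n : nat) (p : profile n) (phi : {perm agent n}) : profile n :=
  [ffun z => rel_act phi (p ((phi^-1)%g z))].

(* mu^phi = phi o mu o phi^-1 (right-to-left composition), i.e. the map
   x |-> phi (mu (phi^-1 x)).  In MathComp, (s * t)%g x = t (s x), so this is
   (phi^-1 * mu * phi)%g. *)
Definition match_act (n : nat) (mu phi : {perm agent n}) : {perm agent n} :=
  (phi^-1 * mu * phi)%g.

Definition mechanism (n : nat) := profile n -> {set {perm agent n}}.

Definition is_gen_mechanism (n : nat) (F : mechanism n) : Prop :=
  forall p, gen_profile p -> forall mu, mu \in F p -> gen_matching mu.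

Definition resolute (n : nat) (F : mechanism n) : Prop :=
  forall p, gen_profile p -> #|F p| = 1.

Definition pareto_mech (n : nat) (F : mechanism n) : Prop :=
  forall p, gen_profile p -> forall mu, mu \in F p -> pareto_optimal p mu.

Definition symmetric_mech (n : nat) (F : mechanism n) : Prop :=
  forall p phi, gen_profile p -> Gstar phi ->
    F (profile_act p phi) = [set match_act mu phi | mu in F p].

From mathcomp Require Import all_boot all_fingroup ssralg zmodp zify.
Set Implicit Arguments. Unset Strict Implicit. Unset Printing Implicit Defensive.
Import GRing.Theory.

(* Seat the 2n agents around a round table, women and men alternating, and let
   everybody rank the agents of the opposite side by their seat, the agent
   sitting opposite being the least preferred partner and staying single the
   worst outcome.  Turning the table by one seat swaps the two sides and fixes
   this profile, so a resolute symmetric mechanism must choose a matching that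
   commutes with the turn.  Such a matching moves every agent by the same seat
   difference d, and d = -d since it is an involution: either everybody is
   single or everybody is matched with the agent sitting opposite.  In both
   cases matching every woman with her right-hand neighbour is a Pareto
   improvement, strict since for n >= 2 that neighbour does not sit opposite. *)

Definition score_order (T : finType) (X : {set T}) (f : T -> nat) : {set T * T} :=
  [set ab | [&& ab.1 \in X, ab.2 \in X & f ab.2 <= f ab.1]].

Lemma score_orderE (T : finType) (X : {set T}) (f : T -> nat) u v :
  ((u, v) \in score_order X f) = [&& u \in X, v \in X & f v <= f u].
Proof. by rewrite inE. Qed.

Lemma score_order_linear (T : finType) (X : {set T}) (f : T -> nat) :
  {in X &, injective f} -> linear_order_on X (score_order X f).
Proof.
move=> f_inj; split.
- by apply/subsetP => -[u v]; rewrite score_orderE !inE => /and3P[-> ->].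
- by move=> a aX; rewrite score_orderE aX leqnn.
- move=> a b; rewrite !score_orderE => /and3P[aX bX ba] /and3P[_ _ ab].
  by apply: f_inj => //; apply/eqP; rewrite eqn_leq ab ba.
- move=> a b c; rewrite !score_orderE => /and3P[aX _ ba] /and3P[_ cX cb].
  by rewrite aX cX (leq_trans cb ba).
- move=> a b aX bX; rewrite !score_orderE aX bX /=.
  by case: (leqP (f b) (f a)) => [|/ltnW]; [left | right].
Qed.

Lemma mem_imset_perm (T : finType) (phi : {perm T}) (A : {set T}) y :
  (y \in phi @: A) = ((phi^-1)%g y \in A).
Proof. by rewrite -{1}[y](permKV phi) mem_imset //; apply: perm_inj. Qed.

Lemma rel_act_score_order n (phi : {perm agent n}) (X Y : {set agent n})
    (f g : agent n -> nat) :
  phi @: X = Y -> (forall x, g (phi x) = f x) ->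
  rel_act phi (score_order X f) = score_order Y g.
Proof.
move=> <- gf; apply/setP => -[u v].
have phi2_inj : injective (fun ab : agent n * agent n => (phi ab.1, phi ab.2)).
  by move=> [a b] [c d] [/perm_inj -> /perm_inj ->].
rewrite -[u](permKV phi) -[v](permKV phi).
rewrite (mem_imset _ ((phi^-1)%g u, (phi^-1)%g v) phi2_inj).
by rewrite !score_orderE !mem_imset_perm !permK !gf.
Qed.

Lemma fixed_match_of_resolute_symmetric n (F : mechanism n) p phi :
  resolute F -> symmetric_mech F -> gen_profile p -> Gstar phi ->
  profile_act p phi = p -> exists2 mu, mu \in F p & match_act mu phi = mu.
Proof.
move=> F_res F_sym p_gen phi_G p_fix.
have /eqP/cards1P[mu Fp] := F_res p p_gen.
exists mu; first by rewrite Fp set11.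
by have := F_sym p phi p_gen phi_G; rewrite p_fix Fp imset_set1 => /set1_inj.
Qed.

Lemma Zp_add_self_eq0 m (u : 'Z_(2 * m)) :
  0 < m -> (u + u = 0)%R -> u = 0%R \/ u = (m%:R)%R.
Proof.
move=> m_gt0 uu.
have m2_gt1 : 1 < 2 * m by lia.
have u_lt : (u : nat) < 2 * m by rewrite -[X in _ < X](Zp_cast m2_gt1).
have /(congr1 (@nat_of_ord _)) : ((u + u)%:R = 0 :> 'Z_(2 * m))%R.
  by rewrite natrD natr_Zp.
rewrite val_Zp_nat // /= => uu_mod.
have := divn_eq (u + u) (2 * m); rewrite uu_mod addn0.
case: ((u + u) %/ (2 * m)) => [|[|q]] u_div; last by nia.
- by left; apply: val_inj => /=; lia.
- by right; apply: val_inj; rewrite /= val_Zp_nat // modn_small; lia.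
Qed.

Section RoundTable.

Variable n : nat.

Local Notation table := 'Z_(2 * n).

Lemma agent_two_n_gt1 (x : agent n) : 1 < 2 * n.
Proof. by have := ltn_ord x; lia. Qed.

Definition seat_index (x : agent n) : nat :=
  if x < n then 2 * x else (2 * (x - n)).+1.

Definition seat (x : agent n) : table := (seat_index x)%:R%R.

Lemma seat_index_lt x : seat_index x < 2 * n.
Proof. by have := ltn_ord x; rewrite /seat_index; case: ifP; lia. Qed.

Lemma val_seat x : seat x = seat_index x :> nat.
Proof. by rewrite val_Zp_nat ?(agent_two_n_gt1 x) // modn_small ?seat_index_lt. Qed.

Lemma seat_inj : injective seat.
Proof.
move=> x y /(congr1 (@nat_of_ord _)); rewrite !val_seat /seat_index => xy.
apply: val_inj => /=; have := ltn_ord x; have := ltn_ord y.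
by move: xy; case: ifP => xn; case: ifP => yn; lia.
Qed.

Definition rotation_index (x : agent n) : nat :=
  if x < n then x + n else if (x - n).+1 < n then (x - n).+1 else 0.

Lemma rotation_index_lt x : rotation_index x < 2 * n.
Proof.
rewrite /rotation_index; have := ltn_ord x.
by case: ifP => xn; [|case: ifP => xl]; lia.
Qed.

Definition rotation_fun (x : agent n) : agent n := Ordinal (rotation_index_lt x).

Lemma seat_rotation_fun x : seat (rotation_fun x) = (seat x + 1)%R.
Proof.
rewrite /seat natr1; have := ltn_ord x; rewrite /seat_index /= /rotation_index.
case: (ltnP x n) => [xn | nx] x_lt /=.
  by rewrite ifN; [congr (_%:R)%R; lia | lia].
case: (ltnP (x - n).+1 n) => [x_last | x_first].
  by rewrite /= x_last; congr (_%:R)%R; lia.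
have n_gt0 : 0 < n by lia.
rewrite /= n_gt0 (_ : (2 * (x - n)).+2 = 2 * n); last by lia.
by rewrite -[RHS]Zp_nat_mod ?(agent_two_n_gt1 x) // modnn.
Qed.

Lemma rotation_fun_inj : injective rotation_fun.
Proof. by move=> x y /(congr1 seat); rewrite !seat_rotation_fun => /addIr /seat_inj. Qed.

Definition rotation : {perm agent n} := perm rotation_fun_inj.

Lemma seat_rotation x : seat (rotation x) = (seat x + 1)%R.
Proof. by rewrite permE seat_rotation_fun. Qed.

Lemma rotation_side x : (rotation x < n) = ~~ (x < n).
Proof.
rewrite permE /= /rotation_index; have := ltn_ord x.
by case: ifP => xn; [|case: ifP => xl]; lia.
Qed.

Lemma rotation_women : rotation @: women n = men n.
Proof.
apply/setP => y; rewrite mem_imset_perm !inE -[y in RHS](permKV rotation).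
by rewrite [in RHS]leqNgt rotation_side negbK.
Qed.

Lemma rotation_men : rotation @: men n = women n.
Proof.
apply/setP => y; rewrite mem_imset_perm !inE -[y in RHS](permKV rotation).
by rewrite [in LHS]leqNgt rotation_side.
Qed.

Lemma Gstar_rotation : Gstar rotation.
Proof. by right; rewrite rotation_women rotation_men. Qed.

Lemma seat_rotationX k x : seat ((rotation ^+ k)%g x) = (seat x + k%:R)%R.
Proof.
elim: k => [|k IHk]; first by rewrite expg0 perm1 addr0.
by rewrite expgSr permM seat_rotation IHk -natr1 addrA.
Qed.

Lemma rotation_transitive x y : exists k, y = (rotation ^+ k)%g x.
Proof.
exists (seat y - seat x)%R; apply: seat_inj.
by rewrite seat_rotationX natr_Zp addrC subrK.
Qed.

Lemma match_act_fixed_commute mu :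
  match_act mu rotation = mu -> forall x, mu (rotation x) = rotation (mu x).
Proof. by move=> mu_fix x; rewrite -{1}mu_fix /match_act !permM permK. Qed.

Definition opposite (z : agent n) : {set agent n} := if z < n then men n else women n.

Definition acceptable (z : agent n) : {set agent n} := z |: opposite z.

Lemma rotation_acceptable z : rotation @: acceptable z = acceptable (rotation z).
Proof.
rewrite imsetU1 /acceptable /opposite rotation_side.
by case: (z < n); rewrite ?rotation_women ?rotation_men.
Qed.

Definition half_turn : table := (n%:R)%R.

(* [d] is a seat difference: [d = 0] (staying single) ranks lowest, and
   [d = half_turn] (the agent sitting opposite) lowest among partners. *)
Definition rank (d : table) : nat :=
  if d == 0%R then 0 else (nat_of_ord (d + half_turn)%R).+1.

Definition score (z x : agent n) : nat := rank (seat x - seat z)%R.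

Lemma rank_inj : injective rank.
Proof.
rewrite /rank => d e; case: eqP => [-> | _]; case: eqP => [-> | _] //.
by move=> /eqP; rewrite eqSS => /eqP /val_inj /addIr.
Qed.

Lemma score_inj z : injective (score z).
Proof. by move=> x y /rank_inj /addIr /seat_inj. Qed.

Lemma score_rotation z x : score (rotation z) (rotation x) = score z x.
Proof. by rewrite /score !seat_rotation opprD addrACA subrr addr0. Qed.

Lemma score_gt0 z x : x != z -> 0 < score z x.
Proof. by rewrite /score /rank subr_eq0 (inj_eq seat_inj) => /negbTE ->. Qed.

Definition table_profile : profile n :=
  [ffun z => score_order (acceptable z) (score z)].

Lemma gen_profile_table : gen_profile table_profile.
Proof.
have lin z X : linear_order_on X (score_order X (score z)).
  by apply: score_order_linear => x y _ _; apply: score_inj.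
move=> z; rewrite ffunE /acceptable /opposite !inE; split=> zn.
  by rewrite zn; apply: lin.
by rewrite leqNgt in zn; rewrite (negbTE zn); apply: lin.
Qed.

Lemma table_profile_rotation : profile_act table_profile rotation = table_profile.
Proof.
apply/ffunP => z; rewrite !ffunE; apply: rel_act_score_order.
  by rewrite rotation_acceptable permKV.
by move=> x; rewrite -{1}[z](permKV rotation) score_rotation.
Qed.

Lemma gen_matching_acceptable (mu : {perm agent n}) z :
  gen_matching mu -> mu z \in acceptable z.
Proof.
case=> muW muM _; apply/setU1P; case: (eqVneq (mu z) z) => [| muz]; [by left | right].
rewrite /opposite; case: ifP => zn.
  by apply: muW; rewrite // inE zn.
by apply: muM; rewrite // inE leqNgt zn.
Qed.

Lemma gen_matching_side_swap (mu : {perm agent n}) :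
  (forall z, mu (mu z) = z) -> (forall z, (mu z < n) = ~~ (z < n)) -> gen_matching mu.
Proof.
move=> mu_inv mu_side; split=> // x; rewrite !inE => xs _.
  by rewrite leqNgt mu_side xs.
by rewrite mu_side -leqNgt.
Qed.

Definition couple_index (i : nat) : nat := if i < n then i + n else i - n.

Lemma couple_index_lt (x : agent n) : couple_index x < 2 * n.
Proof. by have := ltn_ord x; rewrite /couple_index; case: ifP => xn; lia. Qed.

Definition couple_fun (x : agent n) : agent n := Ordinal (couple_index_lt x).

Lemma couple_funK : involutive couple_fun.
Proof.
move=> x; apply: val_inj; have := ltn_ord x; rewrite /= /couple_index.
by case: (ltnP x n) => xn x_lt; [rewrite ifN | rewrite ifT]; lia.
Qed.

Definition couple : {perm agent n} := perm (can_inj couple_funK).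

Lemma couple_side z : (couple z < n) = ~~ (z < n).
Proof.
rewrite permE /= /couple_index; have := ltn_ord z.
by case: ifP => zn; lia.
Qed.

Lemma gen_matching_couple : gen_matching couple.
Proof. by apply: (gen_matching_side_swap _ couple_side) => z; rewrite !permE couple_funK. Qed.

Lemma couple_neq z : couple z != z.
Proof. by apply/eqP => cz; have := couple_side z; rewrite cz; case: (z < n). Qed.

Hypothesis n_gt1 : 1 < n.

Definition origin : agent n :=
  Ordinal (leq_trans (ltnW n_gt1) (leq_pmull n (isT : 0 < 2))).

Lemma val_half_turn : half_turn = n :> nat.
Proof. by rewrite val_Zp_nat ?(agent_two_n_gt1 origin) // modn_small //; lia. Qed.

Lemma half_turn_neq0 : half_turn != 0%R.
Proof. by apply/eqP => /(congr1 (@nat_of_ord _)); rewrite val_half_turn /=; lia. Qed.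

Lemma half_turn_add_self : (half_turn + half_turn = 0)%R.
Proof.
by rewrite -natrD -Zp_nat_mod ?(agent_two_n_gt1 origin) // addnn -mul2n modnn.
Qed.

Lemma invariant_displacement mu z :
    (forall z, mu (mu z) = z) -> (forall x, mu (rotation x) = rotation (mu x)) ->
  (seat (mu z) - seat z = 0)%R \/ (seat (mu z) - seat z = half_turn)%R.
Proof.
move=> mu_inv mu_rot; pose d x := (seat (mu x) - seat x)%R.
have d_rot x : d (rotation x) = d x.
  by rewrite /d mu_rot !seat_rotation opprD addrACA subrr addr0.
have d_const x y : d y = d x.
  have [k ->] := rotation_transitive x y.
  by elim: k => [|k IHk]; rewrite ?expg0 ?perm1 // expgSr permM d_rot.
have d_mu : d (mu z) = (- d z)%R by rewrite /d mu_inv opprB.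
apply: (@Zp_add_self_eq0 n (d z)); first lia.
by rewrite {1}(d_const (mu z) z) d_mu addNr.
Qed.

Lemma seat_couple_origin : (seat (couple origin) - seat origin = 1)%R.
Proof.
have n_gt0 : 0 < n by apply: ltnW.
by rewrite permE /seat /seat_index /= /couple_index n_gt0 add0n ltnn subnn subr0.
Qed.

Lemma invariant_matching_not_pareto mu :
  gen_matching mu -> match_act mu rotation = mu -> ~ pareto_optimal table_profile mu.
Proof.
move=> mu_gen /match_act_fixed_commute mu_rot.
have [_ _ mu_inv] := mu_gen.
have worst z : score z (mu z) <= 1.
  rewrite /score /rank; case: (invariant_displacement z mu_inv mu_rot) => ->.
    by rewrite eqxx.
  by rewrite (negbTE half_turn_neq0) half_turn_add_self.
have better z : weakly_pref (table_profile z) (couple z) (mu z).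
  rewrite /weakly_pref ffunE score_orderE (gen_matching_acceptable z mu_gen).
  rewrite (gen_matching_acceptable z gen_matching_couple) /=.
  exact: leq_trans (worst z) (score_gt0 (couple_neq z)).
move=> mu_po; apply: mu_po; exists couple.
split; [exact: gen_matching_couple | exact: better |].
exists origin; split; first exact: better.
move=> couple_mu; have := invariant_displacement origin mu_inv mu_rot.
rewrite -couple_mu seat_couple_origin => -[] /(congr1 (@nat_of_ord _)) //=.
by rewrite val_half_turn modn_small //; lia.
Qed.

End RoundTable.

Theorem theorem9 (n : nat) (hn : 2 <= n) :
  ~ exists F : mechanism n,
      [/\ is_gen_mechanism F, resolute F, symmetric_mech F & pareto_mech F].
Proof.
move=> [F [F_gen F_res F_sym F_pareto]].
have p_gen := @gen_profile_table n.
have [mu muF mu_fix] := fixed_match_of_resolute_symmetric F_res F_sym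
  p_gen (Gstar_rotation n) (table_profile_rotation n).
exact: (invariant_matching_not_pareto hn (F_gen _ p_gen _ muF) mu_fix
  (F_pareto _ p_gen _ muF)).
Qed.
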